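(* Let $T$ be a binary decision tree (every internal node has exactly two children) of height $h\ge 1$ for a binary classification problem with a favorable and an unfavorable class, in which no internal node has two leaf children predicting the same class (such non-distinguishing splits having been pruned). The PAFER procedure for estimating Statistical Parity of $T$ issues one histogram query for the sensitive-attribute composition of the whole dataset plus one histogram query for each favorable decision rule of $T$, i.e. for each root-to-leaf path ending in a leaf that predicts the favorable class. Then the number $Q$ of queries issued by PAFER satisfies $2 \le Q \le 2^{h-1}+1$.
   Context: The height $h$ of a tree is the maximum number of edges on a root-to-leaf path. A decision rule of a decision tree is the conjunction of the branch conditions along a root-to-leaf path; it is favorable if the leaf it ends in predicts the favorable class. A histogram query asks a data holder, for the set of individuals satisfying a given rule, for the number of individuals in each group of the sensitive attribute. *)

From mathcomp Require Import all_boot.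
Set Implicit Arguments. Unset Strict Implicit. Unset Printing Implicit Defensive.

(* Internal nodes carry a
   branch condition of an arbitrary type C and have exactly two children:
   the left child is taken when the condition holds, the right one when it
   does not.  A leaf predicts a class: true = favorable, false = unfavorable. *)
Inductive dtree (C : Type) : Type :=
| Leaf of bool
| Node of C & dtree C & dtree C.
Arguments Leaf {C}.

Fixpoint height (C : Type) (t : dtree C) : nat :=
  match t with
  | Leaf _ => 0
  | Node _ l r => (maxn (height l) (height r)).+1
  end.

Fixpoint pruned (C : Type) (t : dtree C) : bool :=
  match t with
  | Leaf _ => true
  | Node _ l r =>
      [&& match l, r with
          | Leaf b1, Leaf b2 => b1 != b2
          | _, _ => true
          end, pruned l & pruned r]
  end.

(* A decision rule: the conjunction of branch conditions along a root-to-leaf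
   path, recorded as the list of (condition, outcome) pairs. *)
Definition rule (C : Type) := seq (C * bool).

Fixpoint favorable_rules (C : Type) (t : dtree C) : seq (rule C) :=
  match t with
  | Leaf b => if b then [:: [::]] else [::]
  | Node c l r =>
      map (cons (c, true)) (favorable_rules l) ++
      map (cons (c, false)) (favorable_rules r)
  end.

Inductive query (C : Type) : Type :=
| WholeData
| RuleQuery of rule C.
Arguments WholeData {C}.

Definition pafer_queries (C : Type) (t : dtree C) : seq (query C) :=
  WholeData :: map (@RuleQuery C) (favorable_rules t).

(* In a pruned tree of height at least 1, an internal node of maximal depth has
   two leaf children of different classes, so some rule is favorable and
   Q >= 2.  For the upper bound, a pruned tree of height h has at most 2^(h-1)
   favorable leaves: a node whose children are both leaves has exactly one,
   and otherwise the children's bounds 2^(h_l - 1) + 2^(h_r - 1) add up to at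
   most 2^(max h_l h_r). *)

From mathcomp Require Import all_boot.

Lemma exp2_pred_add_le_max [m n : nat] :
  0 < maxn m n -> 2 ^ m.-1 + 2 ^ n.-1 <= 2 ^ maxn m n.
Proof.
move=> max_gt0.
have exp_le (k : nat) : k <= maxn m n -> 2 ^ k.-1 <= 2 ^ (maxn m n).-1.
  by move=> le_k; rewrite leq_exp2l // -!subn1 leq_sub2r.
apply: leq_trans (leq_add (exp_le m (leq_maxl m n)) (exp_le n (leq_maxr m n))) _.
by rewrite addnn -mul2n -expnS prednK.
Qed.

Lemma size_favorable_rules_gt0 (C : Type) (t : dtree C) :
  pruned t -> 0 < height t -> 0 < size (favorable_rules t).
Proof.
elim: t => [//|c l IHl r IHr] /= /and3P[distinct_leaves pruned_l pruned_r] _.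
rewrite size_cat !size_map addn_gt0.
case: l IHl distinct_leaves pruned_l => [b1|c1 l1 r1] IHl; last first.
  by move=> _ /IHl ->.
case: r IHr pruned_r => [b2|c2 l2 r2] IHr; last first.
  by move=> /IHr -> // _ _; rewrite orbT.
by case: b1 b2 {IHl IHr} => [] [].
Qed.

Lemma size_favorable_rules_le (C : Type) (t : dtree C) :
  pruned t -> size (favorable_rules t) <= 2 ^ (height t).-1.
Proof.
elim: t => [b|c l IHl r IHr] /=; first by case: b.
case/and3P=> distinct_leaves /IHl le_l /IHr le_r.
rewrite size_cat !size_map.
have le_sum : 0 < maxn (height l) (height r) ->
    size (favorable_rules l) + size (favorable_rules r)
      <= 2 ^ maxn (height l) (height r).
  by move=> max_gt0; apply: leq_trans (leq_add le_l le_r)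
                              (exp2_pred_add_le_max max_gt0).
case: l r distinct_leaves le_sum {IHl IHr le_l le_r}
  => [b1|c1 l1 r1] [b2|c2 l2 r2] /= distinct_leaves le_sum.
- by case: b1 b2 {le_sum} distinct_leaves => [] [].
all: by apply: le_sum; rewrite ?max0n ?maxn0 ?maxnSS.
Qed.

Theorem theorem1 (C : Type) (t : dtree C) :
  1 <= height t -> pruned t ->
  2 <= size (pafer_queries t) <= 2 ^ (height t).-1 + 1.
Proof.
move=> height_gt0 pruned_t.
rewrite /pafer_queries /= size_map ltnS addn1 ltnS.
by rewrite size_favorable_rules_gt0 // size_favorable_rules_le.
Qed.
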